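(* Let $m\ge3$ and let $G$ be an $m$-uniform hypergraph on vertex set $[n]$ with at least one edge. Then the signless Laplacian tensor of $G$ is not completely positive.
   Context: An $m$-uniform hypergraph $G=(V,E)$ with $V=[n]$ has edges that are sets of exactly $m$ distinct vertices. Its adjacency tensor $\mathcal{A}\in\mathbb{S}_{m,n}$ has entries $a_{i_1\ldots i_m}=1/(m-1)!$ if $\{i_1,\dots,i_m\}\in E$ and $0$ otherwise; $\mathcal{D}$ is the diagonal tensor with $d_{i\ldots i}$ equal to the degree of vertex $i$; the signless Laplacian tensor is $\mathcal{Q}=\mathcal{D}+\mathcal{A}$. A tensor $\mathcal{A}\in\mathbb{S}_{m,n}$ (symmetric real $m$th order $n$-dimensional) is completely positive if $\mathcal{A}=\sum_{k=1}^r(u^{(k)})^m$ for some $r\ge1$ and $u^{(k)}\in\mathbb{R}^n_+$, where $(u^m)_{i_1\ldots i_m}=u_{i_1}\cdots u_{i_m}$. *)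

From HB Require Import structures.
From mathcomp Require Import all_boot all_order all_algebra.
Set Implicit Arguments. Unset Strict Implicit. Unset Printing Implicit Defensive.
Import Order.TTheory GRing.Theory Num.Theory.
Local Open Scope ring_scope.

Definition tensor (R : Type) (m n : nat) := m.-tuple 'I_n -> R.

Definition uniform_hypergraph (m n : nat) (E : {set {set 'I_n}}) : Prop :=
  forall e, e \in E -> #|e| = m.

Definition hdeg (n : nat) (E : {set {set 'I_n}}) (i : 'I_n) : nat :=
  #|[set e in E | i \in e]|.

Definition adj_tensor (R : numFieldType) (m n : nat) (E : {set {set 'I_n}})
  : tensor R m n :=
  fun t => if [set x in t] \in E then ((m.-1)`!)%:R^-1 else 0.

Definition deg_tensor (R : numFieldType) (m n : nat) (E : {set {set 'I_n}})
  : tensor R m n :=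
  fun t => \sum_(i : 'I_n) if all (fun x => x == i) t then (hdeg E i)%:R else 0.

Definition signless_laplacian (R : numFieldType) (m n : nat)
  (E : {set {set 'I_n}}) : tensor R m n :=
  fun t => @deg_tensor R m n E t + @adj_tensor R m n E t.

Definition tpow (R : numFieldType) (m n : nat) (u : 'I_n -> R) : tensor R m n :=
  fun t => \prod_(k < m) u (tnth t k).

Definition completely_positive (R : numFieldType) (m n : nat)
  (A : tensor R m n) : Prop :=
  exists (r : nat) (u : 'I_r -> 'I_n -> R),
    (0 < r)%N /\ (forall k i, 0 <= u k i) /\
    forall t, A t = \sum_(k < r) @tpow R m n (u k) t.

From HB Require Import structures.
From mathcomp Require Import all_boot all_order all_algebra.
Import Order.TTheory GRing.Theory Num.Theory.
Local Open Scope ring_scope.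

(* The entry of Q at a tuple whose support is a proper subset of an edge, with
   at least two distinct vertices, is zero (it is neither diagonal nor an edge,
   as m >= 3).  For a completely positive tensor, a vanishing entry forces every
   rank-one term u^m to vanish at some index of the tuple, hence at every tuple
   containing that index; so Q would vanish at the tuple enumerating the edge,
   where it is at least 1/(m-1)! > 0. *)

Section CompletelyPositive.

Context {R : numFieldType} {m n : nat}.

Lemma tpow_ge0 (u : 'I_n -> R) (t : m.-tuple 'I_n) :
  (forall i, 0 <= u i) -> 0 <= tpow u t.
Proof. by move=> u_ge0; apply: prodr_ge0 => k _; apply: u_ge0. Qed.

Lemma tpow_eq0_sub (u : 'I_n -> R) (t t' : m.-tuple 'I_n) :
  {subset t <= t'} -> tpow u t = 0 -> tpow u t' = 0.
Proof.
move=> sub_tt' /eqP /prodf_eq0 [k _ /eqP uk0].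
have /tnthP [l tl] := sub_tt' _ (mem_tnth k t).
by apply/eqP/prodf_eq0; exists l => //; rewrite -tl uk0.
Qed.

Lemma completely_positive_eq0_sub {A : tensor R m n} {t t' : m.-tuple 'I_n} :
  completely_positive A -> A t = 0 -> {subset t <= t'} -> A t' = 0.
Proof.
move=> [r [u [_ [u_ge0 defA]]]] At0 sub_tt'.
have /psumr_eq0P tpow_t0 : \sum_(k < r) tpow (u k) t = 0 by rewrite -defA.
rewrite defA big1 // => k _.
apply: tpow_eq0_sub sub_tt' _.
by apply: tpow_t0 => // l _; apply: tpow_ge0.
Qed.

End CompletelyPositive.

Section SignlessLaplacian.

Context {R : numFieldType} {m n : nat} {E : {set {set 'I_n}}}.

Lemma deg_tensor_ge0 (t : m.-tuple 'I_n) : 0 <= deg_tensor R E t.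
Proof. by apply: sumr_ge0 => i _; case: ifP. Qed.

Lemma deg_tensor_eq0 (t : m.-tuple 'I_n) :
  (1 < #|[set x in t]|)%N -> deg_tensor R E t = 0.
Proof.
move=> /card_gt1P [x [y [+ + neq_xy]]]; rewrite !inE => xt yt.
apply: big1 => i _; case: ifP => // /allP t_eq_i.
by move: neq_xy; rewrite (eqP (t_eq_i x xt)) (eqP (t_eq_i y yt)) eqxx.
Qed.

Lemma signless_laplacian_edge_gt0 (t : m.-tuple 'I_n) :
  [set x in t] \in E -> 0 < signless_laplacian R E t.
Proof.
move=> tE; apply: ltr_wpDl; first exact: deg_tensor_ge0.
by rewrite /adj_tensor tE invr_gt0 ltr0n fact_gt0.
Qed.

Lemma signless_laplacian_eq0 (t : m.-tuple 'I_n) :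
  uniform_hypergraph m E -> (1 < #|[set x in t]| < m)%N ->
  signless_laplacian R E t = 0.
Proof.
move=> unifE /andP [card_gt1 card_ltm].
rewrite /signless_laplacian deg_tensor_eq0 // add0r /adj_tensor.
by case: ifP => // /unifE card_eqm; rewrite card_eqm ltnn in card_ltm.
Qed.

End SignlessLaplacian.

Lemma set_tuple_enum (T : finType) (e : {set T}) (m : nat)
    (card_e : size (enum e) == m) :
  [set x in Tuple card_e] = e.
Proof. by apply/setP => x; rewrite inE mem_enum. Qed.

Lemma set_tuple_pair (T : finType) (m : nat) (i j : T) : (1 < m)%N ->
  [set x in [tuple if val k == 0%N then j else i | k < m]] = [set i; j].
Proof.
move=> m_gt1; apply/setP => x; rewrite !inE; apply/tnthP/idP => [[k ->]|].
  by rewrite tnth_mktuple; case: ifP; rewrite eqxx ?orbT.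
case/orP=> /eqP ->.
  by exists (Ordinal m_gt1); rewrite tnth_mktuple.
by exists (Ordinal (ltnW m_gt1)); rewrite tnth_mktuple.
Qed.

Theorem mainTheorem5 (R : realFieldType) (m n : nat) (E : {set {set 'I_n}}) :
  (3 <= m)%N -> uniform_hypergraph m E -> E != set0 ->
  ~ completely_positive (@signless_laplacian R m n E).
Proof.
move=> m_ge3 unifE /set0Pn [e eE] cpQ.
have card_e : size (enum e) == m by rewrite -cardE unifE.
pose te := Tuple card_e.
have [i [j [ie je neq_ij]]] : exists i j, [/\ i \in e, j \in e & i != j].
  by apply/card_gt1P; rewrite unifE //; apply: leq_trans m_ge3.
have m_gt1 : (1 < m)%N by apply: leq_trans m_ge3.
pose tij := [tuple if val k == 0%N then j else i | k < m].
have Q_tij : signless_laplacian R E tij = 0.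
  by apply: signless_laplacian_eq0; rewrite // set_tuple_pair // cards2 neq_ij.
have sub_tij_te : {subset tij <= te}.
  move=> x; rewrite -[x \in tij]in_set set_tuple_pair // -[x \in te]in_set.
  by rewrite set_tuple_enum !inE => /orP [] /eqP ->.
have := signless_laplacian_edge_gt0 (R := R) (E := E) te.
rewrite set_tuple_enum => /(_ eE).
by rewrite (completely_positive_eq0_sub cpQ Q_tij sub_tij_te) ltxx.
Qed.
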